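(* Let $n=2K+1$, let $m_1,\dots,m_n>0$ be fixed constants, and let $M=\{(x_1,\dots,x_n)\in\mathbb{R}^n: x_1<\dots<x_n\}$ carry the Poisson bracket determined by $\{x_i,x_k\}=\operatorname{sgn}(x_i-x_k)$, i.e. $\{f,g\}=\sum_{i,k}\operatorname{sgn}(x_i-x_k)\frac{\partial f}{\partial x_i}\frac{\partial g}{\partial x_k}$. Set $h_i=m_ie^{x_i}$, $g_i=m_ie^{-x_i}$, $$H_j=\sum_{\substack{I,J\in\binom{[2K+1]}{j}\\ I<J}} h_I g_J,\quad 1\le j\le K,\qquad H_c=\sum_{\substack{I\in\binom{[2K+1]}{K+1},\,J\in\binom{[2K+1]}{K}\\ I<J}} h_I g_J=\prod_{j=1}^{2K+1} m_j e^{(-1)^{j+1}x_j}.$$ Then the functions $H_1,\dots,H_K,H_c$ pairwise Poisson commute.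
   Context: $[k]=\{1,\dots,k\}$ and $\binom{[k]}{j}$ is the set of $j$-element subsets $I=\{i_1<\dots<i_j\}$ of $[k]$. For $I,J\in\binom{[k]}{j}$, $I<J$ means $i_1<j_1<\dots<i_j<j_j$; for $I\in\binom{[k]}{j+1}$, $J\in\binom{[k]}{j}$, $I<J$ means $i_1<j_1<\dots<i_j<j_j<i_{j+1}$. Also $h_I=\prod_{i\in I}h_i$, $g_J=\prod_{j\in J}g_j$. (These are constants of motion of the conservative mCH peakon system $\dot x_j=2\sum_{k\ne j}m_jm_ke^{-|x_j-x_k|}+4\sum_{1\le i<j<k\le n}m_im_ke^{-|x_i-x_k|}$ on $M$.) *)

From HB Require Import structures.
From mathcomp Require Import all_boot all_order all_algebra.
From mathcomp Require Import all_classical all_reals all_analysis.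
Set Implicit Arguments. Unset Strict Implicit. Unset Printing Implicit Defensive.
Import Order.TTheory GRing.Theory Num.Theory.
Local Open Scope ring_scope.

Fixpoint interlace (s t : seq nat) : seq nat :=
  match s, t with
  | a :: s', b :: t' => a :: b :: interlace s' t'
  | [::], _ => t
  | _, [::] => s
  end.

Definition idxs (n : nat) (I : {set 'I_n}) : seq nat :=
  sort leq [seq val i | i <- enum I].

(* I < J : i_1 < j_1 < i_2 < j_2 < ... (< i_{j+1} when #|I| = #|J| + 1) *)
Definition interl (n : nat) (I J : {set 'I_n}) : bool :=
  sorted ltn (interlace (idxs I) (idxs J)).

Section Peakon.
Variable R : realType.

Definition hI (n : nat) (m : 'I_n -> R) (I : {set 'I_n}) (x : 'I_n -> R) : R :=
  \prod_(i in I) (m i * expR (x i)).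
Definition gJ (n : nat) (m : 'I_n -> R) (J : {set 'I_n}) (x : 'I_n -> R) : R :=
  \prod_(j in J) (m j * expR (- x j)).

Definition Hsum (n : nat) (m : 'I_n -> R) (p q : nat) (x : 'I_n -> R) : R :=
  \sum_(I : {set 'I_n} | #|I| == p)
    \sum_(J : {set 'I_n} | (#|J| == q) && interl I J) hI m I x * gJ m J x.

Definition Hj (K : nat) (m : 'I_(K.*2.+1) -> R) (j : nat) := Hsum m j j.
Definition Hc (K : nat) (m : 'I_(K.*2.+1) -> R) := Hsum m K.+1 K.

Definition upd (n : nat) (x : 'I_n -> R) (i : 'I_n) (t : R) : 'I_n -> R :=
  fun k => if k == i then t else x k.

Definition partial (n : nat) (f : ('I_n -> R) -> R) (i : 'I_n) (x : 'I_n -> R) : R :=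
  derive1 (fun t => f (upd x i t)) (x i).

Definition pbracket (n : nat) (f g : ('I_n -> R) -> R) (x : 'I_n -> R) : R :=
  \sum_(i < n) \sum_(k < n) Num.sg (x i - x k) * partial f i x * partial g k x.

Definition inM (n : nat) (x : 'I_n -> R) : Prop :=
  forall i k : 'I_n, (i < k)%N -> x i < x k.

End Peakon.

(* On M, sgn(x_i - x_k) = sgn(i - k), and d/dx_i (h_I g_J) = eps_IJ(i) h_I g_J
   with eps_IJ = 1_I - 1_J.  Hence, for F_pq the sum of h_I g_J over interlacing
   (I, J) of sizes (p, q), {F_pq, F_rs} is a polynomial in h, g whose coefficients
   are the bilinear form sum_{i,k} sgn(i - k) eps_IJ(i) eps_XY(k).  Restricting all
   indices to {0, ..., t-1} and adjoining the index t (which can enter I, J, both or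
   neither) expresses the truncated brackets at t+1 through those at t; the four
   relations {F_pp, F_qq} = 0, {F_{p+1,p}, F_{q+1,q}} = 0,
   {F_pp, F_{q+1,q}} + {F_{p+1,p}, F_qq} = F_{p+1,p} F_qq - F_pp F_{q+1,q} and
   {F_{p+1,p+1}, F_{q+1,q}} + {F_{p+1,p}, F_{q+1,q+1}} = 0 are thus propagated
   from t = 0 to t = n, and the first one says that the H_j commute.
   For n = 2K+1 each term of H_c has I and J filling the indices alternately, so
   d H_c / dx_k = (-1)^k H_c, and sum_k sgn(i - k) (-1)^k = 0 for an odd number
   of indices. *)

From HB Require Import structures.
From mathcomp Require Import all_boot all_order all_algebra.
From mathcomp Require Import all_classical all_reals all_analysis.
From mathcomp Require Import ring.
Import Order.TTheory GRing.Theory Num.Theory.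
Set Implicit Arguments. Unset Strict Implicit. Unset Printing Implicit Defensive.
Local Open Scope ring_scope.

Lemma interlace_rcons_l (s t : seq nat) x : (size t <= size s)%N ->
  interlace (rcons s x) t = rcons (interlace s t) x.
Proof. by elim: s t => [|a s IH] [|b t] //= st; rewrite IH. Qed.

Lemma interlace_rcons_r (s t : seq nat) y : (size t <= size s <= (size t).+1)%N ->
  interlace s (rcons t y) = rcons (interlace s t) y.
Proof.
elim: s t => [|a s IH] [|b t] //=; first by case: s {IH}.
by rewrite !ltnS => st; rewrite IH.
Qed.

Lemma interlace_rcons2 (s t : seq nat) x y : size s = size t ->
  interlace (rcons s x) (rcons t y) = rcons (rcons (interlace s t) x) y.
Proof.
move=> st; rewrite interlace_rcons_r ?size_rcons ?st ?leqnSn ?leqnn //.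
by rewrite interlace_rcons_l ?st.
Qed.

Lemma interlace_rcons2S (s t : seq nat) x y : size s = (size t).+1 ->
  interlace (rcons s x) (rcons t y) = rcons (rcons (interlace s t) y) x.
Proof.
move=> st; rewrite interlace_rcons_l ?size_rcons ?st //.
by rewrite interlace_rcons_r ?st ?leqnSn ?leqnn.
Qed.

Lemma mem_interlace (s t : seq nat) x :
  (x \in interlace s t) = (x \in s) || (x \in t).
Proof.
elim: s t => [|a s IH] [|b t] //=; first by rewrite orbF.
by rewrite !inE IH; case: (x == a); case: (x == b); case: (x \in s).
Qed.

Lemma sorted_ltn_rcons2 (s : seq nat) x y :
  sorted ltn (rcons (rcons s x) y) -> (x < y)%N.
Proof.
case: s => [|z s] /=; first by rewrite andbT.
by rewrite rcons_path last_rcons => /andP[].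
Qed.

Lemma sorted_ltn_rcons (s : seq nat) y : {in s, forall x, x < y}%N ->
  sorted ltn (rcons s y) = sorted ltn s.
Proof.
case: s => [|z s] //= sy.
by rewrite rcons_path /= sy ?andbT // mem_last.
Qed.

Definition add_if n (a : 'I_n) (b : bool) (I : {set 'I_n}) := if b then a |: I else I.
Arguments add_if : simpl never.

Section BoundedSets.
Variable n : nat.
Implicit Types (t : nat) (I J : {set 'I_n}).

Definition below t I : bool := [forall i in I, (i < t)%N].

Lemma belowP t I : reflect {in I, forall i : 'I_n, i < t}%N (below t I).
Proof.
apply: (iffP forall_inP) => [H i|H i]; exact: H.
Qed.

Lemma below_ord I : below n I.
Proof. by apply/belowP => i _; apply: ltn_ord. Qed.

Lemma below0 I : below 0 I -> I = finset.set0.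
Proof. by move/belowP => bI; apply/setP => i; rewrite inE; apply/idP => /bI. Qed.

Lemma size_idxs I : size (idxs I) = #|I|.
Proof. by rewrite /idxs size_sort size_map cardE. Qed.

Lemma mem_idxs I x : (x \in idxs I) = [exists i in I, val i == x].
Proof.
rewrite /idxs mem_sort; apply/mapP/exists_inP => [[i]|[i iI /eqP <-]].
  by rewrite mem_enum => iI ->; exists i.
by exists i; rewrite ?mem_enum.
Qed.

Lemma idxs_below t I : below t I -> {in idxs I, forall x, x < t}%N.
Proof.
by move=> /belowP bI x; rewrite mem_idxs => /exists_inP[i iI /eqP <-]; apply: bI.
Qed.

Lemma sorted_idxs I : sorted leq (idxs I).
Proof. exact/sort_sorted/leq_total. Qed.

Variables (t : nat) (a : 'I_n).
Hypothesis at0 : val a = t.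

Lemma below_notin I : below t I -> a \notin I.
Proof. by move=> /belowP bI; apply/negP => /bI; rewrite at0 ltnn. Qed.

Lemma card_below_U1 I : below t I -> #|a |: I| = #|I|.+1.
Proof. by move=> bI; rewrite cardsU1 (below_notin bI). Qed.

Lemma idxs_below_U1 I : below t I -> idxs (a |: I) = rcons (idxs I) t.
Proof.
move=> bI; apply: (sorted_eq leq_trans anti_leq); first exact: sorted_idxs.
  case E: (idxs I) (sorted_idxs I) => [|c l] //= sI.
  by rewrite rcons_path sI ltnW // (idxs_below bI) // E mem_last.
rewrite /idxs perm_sort perm_sym perm_rcons -at0.
apply: (@perm_trans _ [seq val i | i <- a :: enum I]).
  by rewrite perm_cons perm_sort.
apply: perm_map; apply: uniq_perm.
- by rewrite /= enum_uniq mem_enum below_notin.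
- exact: enum_uniq.
- by move=> i; rewrite mem_enum !inE mem_enum.
Qed.

Lemma below_notin_S I : below t.+1 I && (a \notin I) = below t I.
Proof.
apply/andP/idP => [[/belowP bI aI]|bI]; last first.
  split; last exact: (below_notin bI).
  by apply/belowP => i /(belowP _ _ bI) /ltnW.
apply/belowP => i iI; have := bI i iI; rewrite ltnS leq_eqVlt => /orP[/eqP it|//].
by move: aI; rewrite (_ : a = i) ?iI //; apply: val_inj; rewrite /= it.
Qed.

Lemma below_U1_S I :
  below t.+1 (a |: I) && (a \in a |: I) && ((a |: I) :\ a == I) = below t I.
Proof.
rewrite setU11 andbT; apply/andP/idP => [[bI /eqP aII]|bI].
  have aI : a \notin I by rewrite -aII !inE eqxx.
  rewrite -below_notin_S aI andbT; apply/belowP => i iI.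
  by apply: (belowP _ _ bI); rewrite !inE iI orbT.
rewrite setU1K ?(below_notin bI) //; split => //.
apply/belowP => i; rewrite !inE => /orP[/eqP ->|iI]; first by rewrite at0.
exact: ltnW (belowP _ _ bI i iI).
Qed.

Lemma below_S_add_if I : below t.+1 I -> below t (I :\ a) /\ I = add_if a (a \in I) (I :\ a).
Proof.
move=> bI; split.
  rewrite -below_notin_S !inE eqxx andbT; apply/belowP => i.
  by rewrite !inE => /andP[_ /(belowP _ _ bI)].
rewrite /add_if; case: ifP => aI; first by rewrite finset.setD1K.
by apply/setP => i; rewrite !inE; case: eqVneq => // ->; rewrite aI.
Qed.

End BoundedSets.

Section InterlacingPairs.
Variable n : nat.
Implicit Types (p q : nat) (I J : {set 'I_n}).

Definition ilpair p q I J : bool := [&& #|I| == p, #|J| == q & interl I J].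

Lemma ilpair_card p q I J : ilpair p q I J -> #|I| = p /\ #|J| = q.
Proof. by case/and3P => /eqP -> /eqP ->. Qed.

Variables (t : nat) (a : 'I_n).
Hypothesis at0 : val a = t.
Variables I J : {set 'I_n}.
Hypotheses (bI : below t I) (bJ : below t J).

Let interl_below : {in interlace (idxs I) (idxs J), forall x, x < t}%N.
Proof. by move=> x; rewrite mem_interlace => /orP[]; apply: idxs_below. Qed.

Lemma interl_U1l : #|I| = #|J| -> interl (a |: I) J = interl I J.
Proof.
move=> IJ; rewrite /interl (idxs_below_U1 at0 bI) interlace_rcons_l ?size_idxs ?IJ //.
exact: sorted_ltn_rcons interl_below.
Qed.

Lemma interl_U1r : #|I| = #|J|.+1 -> interl I (a |: J) = interl I J.
Proof.
move=> IJ; rewrite /interl (idxs_below_U1 at0 bJ).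
rewrite interlace_rcons_r ?size_idxs ?IJ ?leqnSn ?leqnn //.
exact: sorted_ltn_rcons interl_below.
Qed.

Lemma interl_U1l_false : #|J| = #|I|.+1 -> interl (a |: I) J = false.
Proof.
rewrite /interl (idxs_below_U1 at0 bI) -!size_idxs.
have := @idxs_below _ _ _ bJ; case/lastP: (idxs J) => [|s y] // yJ.
rewrite size_rcons => -[IJ]; rewrite interlace_rcons2 //; apply/negP => /sorted_ltn_rcons2.
by rewrite ltnNge ltnW // yJ // mem_rcons mem_head.
Qed.

Lemma interl_U1r_false : #|I| = #|J|.+2 -> interl I (a |: J) = false.
Proof.
rewrite /interl (idxs_below_U1 at0 bJ) -!size_idxs.
have := @idxs_below _ _ _ bI; case/lastP: (idxs I) => [|s y] // yI.
rewrite size_rcons => -[IJ]; rewrite interlace_rcons2S //; apply/negP => /sorted_ltn_rcons2.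
by rewrite ltnNge ltnW // yI // mem_rcons mem_head.
Qed.

Lemma interl_U1lr_false : #|I| = #|J| \/ #|I| = #|J|.+1 ->
  interl (a |: I) (a |: J) = false.
Proof.
rewrite /interl (idxs_below_U1 at0 bI) (idxs_below_U1 at0 bJ) -!size_idxs.
case=> IJ; [rewrite interlace_rcons2 // | rewrite interlace_rcons2S //];
  by apply/negP => /sorted_ltn_rcons2; rewrite ltnn.
Qed.

Lemma ilpair_eq_U1l p : ilpair p p (a |: I) J = false.
Proof.
rewrite /ilpair (card_below_U1 at0 bI).
case: eqP => //= IS; case: eqP => //= Jp.
by rewrite interl_U1l_false // IS Jp.
Qed.

Lemma ilpair_eq_U1r p :
  ilpair p p I (a |: J) = if p is p'.+1 then ilpair p p' I J else false.
Proof.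
rewrite /ilpair (card_below_U1 at0 bJ); case: p => [|p]; first by rewrite andbF.
rewrite eqSS; case: eqP => //= Ip; case: eqP => //= Jp.
by rewrite interl_U1r // Ip Jp.
Qed.

Lemma ilpair_eq_U1lr p : ilpair p p (a |: I) (a |: J) = false.
Proof.
rewrite /ilpair (card_below_U1 at0 bI) (card_below_U1 at0 bJ).
case: eqP => //= IS; case: eqP => //= JS.
by rewrite interl_U1lr_false //; left; apply: succn_inj; rewrite IS JS.
Qed.

Lemma ilpair_succ_U1l p : ilpair p.+1 p (a |: I) J = ilpair p p I J.
Proof.
rewrite /ilpair (card_below_U1 at0 bI) eqSS.
case: eqP => //= Ip; case: eqP => //= Jp.
by rewrite interl_U1l // Ip Jp.
Qed.

Lemma ilpair_succ_U1r p : ilpair p.+1 p I (a |: J) = false.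
Proof.
rewrite /ilpair (card_below_U1 at0 bJ).
case: eqP => //= Ip; case: eqP => //= JS.
by rewrite interl_U1r_false // Ip -JS.
Qed.

Lemma ilpair_succ_U1lr p : ilpair p.+1 p (a |: I) (a |: J) = false.
Proof.
rewrite /ilpair (card_below_U1 at0 bI) (card_below_U1 at0 bJ) eqSS.
case: eqP => //= Ip; case: eqP => //= JS.
rewrite interl_U1lr_false //; right; rewrite Ip.
by case: p JS Ip => [|p] // [->].
Qed.

End InterlacingPairs.

Section InterlacingSums.
Variables (R : nmodType) (n : nat).
Implicit Types (p q t : nat) (I J : {set 'I_n}) (phi : {set 'I_n} -> {set 'I_n} -> R).

Definition ilterm p q phi I J : R := if ilpair p q I J then phi I J else 0.

Definition ilsum t p q phi : R :=
  \sum_(I | below t I) \sum_(J | below t J) ilterm p q phi I J.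

Lemma eq_ilsum t p q phi psi :
  (forall I J, below t I -> below t J -> ilpair p q I J -> phi I J = psi I J) ->
  ilsum t p q phi = ilsum t p q psi.
Proof.
move=> E; apply: eq_bigr => I bI; apply: eq_bigr => J bJ.
by rewrite /ilterm; case: ifP => // IJ; rewrite E.
Qed.

Lemma ilsum0 t p q phi :
  (forall I J, below t I -> below t J -> ilpair p q I J -> phi I J = 0) ->
  ilsum t p q phi = 0.
Proof.
move=> E; rewrite /ilsum big1 // => I bI; rewrite big1 // => J bJ.
by rewrite /ilterm; case: ifP => // IJ; rewrite E.
Qed.

Lemma ilsumD t p q phi psi :
  ilsum t p q (fun I J => phi I J + psi I J) = ilsum t p q phi + ilsum t p q psi.
Proof.
rewrite /ilsum -big_split; apply: eq_bigr => I _; rewrite -big_split.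
by apply: eq_bigr => J _; rewrite /ilterm; case: ifP => //= _; rewrite addr0.
Qed.

Lemma ilsum_sum (T : finType) t p q (F : T -> {set 'I_n} -> {set 'I_n} -> R) :
  ilsum t p q (fun I J => \sum_(i : T) F i I J) = \sum_(i : T) ilsum t p q (F i).
Proof.
rewrite /ilsum [RHS]exchange_big; apply: eq_bigr => I _; rewrite [RHS]exchange_big.
by apply: eq_bigr => J _; rewrite /ilterm; case: ifP => // _; rewrite big1.
Qed.

Lemma ilsum_ord p q phi : ilsum n p q phi =
  \sum_(I : {set 'I_n} | #|I| == p)
    \sum_(J : {set 'I_n} | (#|J| == q) && interl I J) phi I J.
Proof.
have sum_below (F : {set 'I_n} -> R) : \sum_(I | below n I) F I = \sum_I F I.
  by apply: eq_bigl => I; apply: below_ord.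
rewrite /ilsum sum_below [RHS]big_mkcond; apply: eq_bigr => I _.
rewrite sum_below /ilterm /ilpair; case: eqP => _; last by rewrite big1.
by rewrite [RHS]big_mkcond.
Qed.

Variables (t : nat) (a : 'I_n).
Hypothesis at0 : val a = t.

Lemma sum_belowS (F : {set 'I_n} -> R) :
  \sum_(I | below t.+1 I) F I = \sum_(I | below t I) F I + \sum_(I | below t I) F (a |: I).
Proof.
rewrite (bigID (fun I => a \in I)) /= addrC; congr (_ + _).
  by apply: eq_bigl => I; rewrite (below_notin_S at0).
rewrite (reindex_onto (fun I => a |: I) (fun I => I :\ a)) /=.
  by apply: eq_bigl => I; rewrite (below_U1_S at0).
by move=> I /andP[_ aI]; rewrite finset.setD1K.
Qed.

Lemma ilsumS p q phi : ilsum t.+1 p q phi =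
  \sum_(I | below t I) \sum_(J | below t J)
    (ilterm p q phi I J + ilterm p q phi I (a |: J)
     + (ilterm p q phi (a |: I) J + ilterm p q phi (a |: I) (a |: J))).
Proof.
rewrite /ilsum sum_belowS -big_split; apply: eq_bigr => I _.
by rewrite !sum_belowS !big_split.
Qed.

Lemma ilsumS_eq p phi : ilsum t.+1 p p phi =
  ilsum t p p (fun I J => phi (add_if a false I) (add_if a false J)) +
  if p is p'.+1 then ilsum t p p' (fun I J => phi (add_if a false I) (add_if a true J)) else 0.
Proof.
rewrite ilsumS; under eq_bigr => I bI do under eq_bigr => J bJ do
  rewrite {3 4}/ilterm (ilpair_eq_U1l at0 bI bJ) (ilpair_eq_U1lr at0 bI bJ) !addr0.
under eq_bigr do rewrite big_split; rewrite big_split; congr (_ + _).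
case: p => [|p]; [rewrite big1 // | apply: eq_bigr] => I bI;
  [rewrite big1 // | apply: eq_bigr] => J bJ;
  by rewrite /ilterm (ilpair_eq_U1r at0 bI bJ).
Qed.

Lemma ilsumS_succ p phi : ilsum t.+1 p.+1 p phi =
  ilsum t p.+1 p (fun I J => phi (add_if a false I) (add_if a false J)) +
  ilsum t p p (fun I J => phi (add_if a true I) (add_if a false J)).
Proof.
rewrite ilsumS; under eq_bigr => I bI do under eq_bigr => J bJ do
  rewrite {2 4}/ilterm (ilpair_succ_U1r at0 bI bJ) (ilpair_succ_U1lr at0 bI bJ) !addr0.
under eq_bigr do rewrite big_split; rewrite big_split; congr (_ + _).
apply: eq_bigr => I bI; apply: eq_bigr => J bJ.
by rewrite /ilterm (ilpair_succ_U1l at0 bI bJ).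
Qed.

Lemma ilsum_ilsumS_eq p q r
    (Psi : {set 'I_n} -> {set 'I_n} -> {set 'I_n} -> {set 'I_n} -> R) :
  ilsum t p q (fun I J => ilsum t.+1 r r (Psi I J)) =
  ilsum t p q (fun I J => ilsum t r r (fun X Y =>
    Psi I J (add_if a false X) (add_if a false Y))) +
  if r is r'.+1 then ilsum t p q (fun I J => ilsum t r r' (fun X Y =>
    Psi I J (add_if a false X) (add_if a true Y))) else 0.
Proof.
rewrite (eq_ilsum (psi := fun I J => ilsum t r r (fun X Y =>
    Psi I J (add_if a false X) (add_if a false Y)) +
  if r is r'.+1 then ilsum t r r' (fun X Y =>
    Psi I J (add_if a false X) (add_if a true Y)) else 0)) => [|I J _ _ _].
  by case: r => [|r]; rewrite ilsumD // [X in _ + X]ilsum0 ?addr0.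
exact: ilsumS_eq.
Qed.

Lemma ilsum_ilsumS_succ p q r
    (Psi : {set 'I_n} -> {set 'I_n} -> {set 'I_n} -> {set 'I_n} -> R) :
  ilsum t p q (fun I J => ilsum t.+1 r.+1 r (Psi I J)) =
  ilsum t p q (fun I J => ilsum t r.+1 r (fun X Y =>
    Psi I J (add_if a false X) (add_if a false Y))) +
  ilsum t p q (fun I J => ilsum t r r (fun X Y =>
    Psi I J (add_if a true X) (add_if a false Y))).
Proof. by rewrite -ilsumD; apply: eq_ilsum => I J _ _ _; apply: ilsumS_succ. Qed.

End InterlacingSums.

Section InterlacingSumsScale.
Variables (R : pzSemiRingType) (n : nat).
Implicit Types (p q t : nat) (phi : {set 'I_n} -> {set 'I_n} -> R).

Lemma ilsumZl t p q c phi :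
  ilsum t p q (fun I J => c * phi I J) = c * ilsum t p q phi.
Proof.
rewrite /ilsum mulr_sumr; apply: eq_bigr => I _; rewrite mulr_sumr.
by apply: eq_bigr => J _; rewrite /ilterm; case: ifP; rewrite ?mulr0.
Qed.

Lemma ilsumZr t p q c phi :
  ilsum t p q (fun I J => phi I J * c) = ilsum t p q phi * c.
Proof.
rewrite /ilsum mulr_suml; apply: eq_bigr => I _; rewrite mulr_suml.
by apply: eq_bigr => J _; rewrite /ilterm; case: ifP; rewrite ?mul0r.
Qed.

End InterlacingSumsScale.

Section SignedCharges.
Variables (R : comNzRingType) (n : nat).
Implicit Types (I J X Y : {set 'I_n}) (i k : 'I_n).

Definition charge I J i : R := (i \in I)%:R - (i \in J)%:R.

Definition sgn_ord i k : R := (k < i)%:R - (i < k)%:R.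

Definition bform I J X Y : R :=
  \sum_i \sum_k sgn_ord i k * charge I J i * charge X Y k.

Lemma sgn_ord_lt i k : (i < k)%N -> sgn_ord i k = -1.
Proof. by move=> ik; rewrite /sgn_ord ik ltnNge ltnW // sub0r. Qed.

Lemma sgn_ord_gt i k : (k < i)%N -> sgn_ord i k = 1.
Proof. by move=> ki; rewrite /sgn_ord ki ltnNge ltnW // subr0. Qed.

Lemma sgn_ordii i : sgn_ord i i = 0.
Proof. by rewrite /sgn_ord subrr. Qed.

Lemma sgn_ordC i k : sgn_ord i k = - sgn_ord k i.
Proof. by rewrite /sgn_ord opprB. Qed.

Lemma charge0 i : charge finset.set0 finset.set0 i = 0.
Proof. by rewrite /charge !inE subrr. Qed.

Lemma charge_notin I J i : i \notin I -> i \notin J -> charge I J i = 0.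
Proof. by rewrite /charge => /negbTE -> /negbTE ->; rewrite subrr. Qed.

Lemma sum_charge I J : \sum_i charge I J i = #|I|%:R - #|J|%:R.
Proof.
have sum_in (A : {set 'I_n}) : \sum_i ((i \in A)%:R : R) = #|A|%:R.
  by rewrite -sum1_card natr_sum [RHS]big_mkcond; apply: eq_bigr => i _; case: (i \in A).
by rewrite sumrB !sum_in.
Qed.

End SignedCharges.

Section TruncatedBracket.
Variables (R : comNzRingType) (n : nat) (h g : 'I_n -> R).
Implicit Types (p q r s t : nat) (I J X Y : {set 'I_n}).

Definition wt I J : R := \prod_(i in I) h i * \prod_(j in J) g j.

Definition tsum t p q : R := ilsum t p q wt.

(* [tbracket t p q r s] is {F_pq, F_rs} with h, g formal and all indices below t. *)
Definition tbracket t p q r s : R := ilsum t p q (fun I J =>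
  ilsum t r s (fun X Y => bform R I J X Y * wt I J * wt X Y)).

Lemma tbracket0l t r s : tbracket t 0 0 r s = 0.
Proof.
apply: ilsum0 => I J _ _ /ilpair_card[/cards0_eq -> /cards0_eq ->].
apply: ilsum0 => X Y _ _ _; rewrite /bform big1 ?mul0r // => i _.
by rewrite big1 // => k _; rewrite charge0 mulr0 mul0r.
Qed.

Lemma tbracket0r t p q : tbracket t p q 0 0 = 0.
Proof.
apply: ilsum0 => I J _ _ _.
apply: ilsum0 => X Y _ _ /ilpair_card[/cards0_eq -> /cards0_eq ->].
by rewrite /bform big1 ?mul0r // => i _; rewrite big1 // => k _; rewrite charge0 mulr0.
Qed.

Lemma tbracket_below0 p q r s : tbracket 0 p q r s = 0.
Proof.
apply: ilsum0 => I J /below0 -> /below0 -> _; apply: ilsum0 => X Y _ _ _.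
by rewrite /bform big1 ?mul0r // => i _; rewrite big1 // => k _; rewrite charge0 mulr0 mul0r.
Qed.

Lemma tsum_below0 p : tsum 0 p.+1 p = 0.
Proof. by apply: ilsum0 => I J /below0 -> _ /ilpair_card[]; rewrite cards0. Qed.

Lemma tbracketE t p q r s : tbracket t p q r s =
  \sum_i \sum_k sgn_ord R i k * ilsum t p q (fun I J => charge R I J i * wt I J)
                             * ilsum t r s (fun X Y => charge R X Y k * wt X Y).
Proof.
rewrite /tbracket (eq_ilsum (psi := fun I J => \sum_i \sum_k ilsum t r s (fun X Y =>
  sgn_ord R i k * (charge R I J i * wt I J) * (charge R X Y k * wt X Y)))) => [|I J _ _ _].
  rewrite ilsum_sum; apply: eq_bigr => i _; rewrite ilsum_sum; apply: eq_bigr => k _.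
  rewrite (eq_ilsum (psi := fun I J => sgn_ord R i k * (charge R I J i * wt I J) *
    ilsum t r s (fun X Y => charge R X Y k * wt X Y))) => [|I J _ _ _].
    by rewrite ilsumZr ilsumZl.
  by rewrite -ilsumZl.
under eq_bigr do rewrite -ilsum_sum; rewrite -ilsum_sum.
apply: eq_ilsum => X Y _ _ _; rewrite /bform !mulr_suml; apply: eq_bigr => i _.
by rewrite !mulr_suml; apply: eq_bigr => k _; ring.
Qed.

Lemma tbracket_affine t p q r s (c k : R)
    (Phi : {set 'I_n} -> {set 'I_n} -> {set 'I_n} -> {set 'I_n} -> R) :
  (forall I J X Y, below t I -> below t J -> below t X -> below t Y ->
     ilpair p q I J -> ilpair r s X Y ->
     Phi I J X Y = c * (bform R I J X Y * wt I J * wt X Y + k * (wt I J * wt X Y))) ->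
  ilsum t p q (fun I J => ilsum t r s (Phi I J)) =
  c * (tbracket t p q r s + k * (tsum t p q * tsum t r s)).
Proof.
move=> PhiE.
rewrite (eq_ilsum (psi := fun I J => c * (ilsum t r s (fun X Y =>
    bform R I J X Y * wt I J * wt X Y) + k * (wt I J * tsum t r s)))).
  by rewrite ilsumZl ilsumD ilsumZl ilsumZr.
move=> I J bI bJ IJ; rewrite (eq_ilsum (phi := Phi I J) (psi := fun X Y =>
  c * (bform R I J X Y * wt I J * wt X Y + k * (wt I J * wt X Y)))).
  by rewrite ilsumZl ilsumD !ilsumZl.
by move=> X Y bX bY XY; apply: PhiE.
Qed.

Variables (t : nat) (a : 'I_n).
Hypothesis at0 : val a = t.

Lemma wt_add_if bI bJ I J : below t I -> below t J ->
  wt (add_if a bI I) (add_if a bJ J) =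
  (if bI then h a else 1) * (if bJ then g a else 1) * wt I J.
Proof.
move=> /(below_notin at0) aI /(below_notin at0) aJ; rewrite /wt /add_if.
by case: bI; case: bJ; rewrite ?big_setU1 //=; ring.
Qed.

Lemma charge_add_if bI bJ I J i : below t I -> below t J ->
  charge R (add_if a bI I) (add_if a bJ J) i = charge R I J i + (bI%:R - bJ%:R) * (i == a)%:R.
Proof.
move=> /(below_notin at0)/negbTE aI /(below_notin at0)/negbTE aJ.
rewrite /charge /add_if; case: (eqVneq i a) => [->|ia].
  by case: bI; case: bJ; rewrite ?inE ?eqxx ?aI ?aJ /=; ring.
by case: bI; case: bJ; rewrite ?inE ?(negbTE ia) /=; ring.
Qed.

Lemma sum_mulr_delta (f : 'I_n -> R) : \sum_i f i * (i == a)%:R = f a.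
Proof.
rewrite (bigD1 a) //= eqxx mulr1 big1 ?addr0 // => i /negbTE ->.
by rewrite mulr0.
Qed.

Lemma sum_sgn_top I J : below t I -> below t J ->
  \sum_k sgn_ord R a k * charge R I J k = #|I|%:R - #|J|%:R.
Proof.
move=> /belowP bI /belowP bJ; rewrite -sum_charge; apply: eq_bigr => k _.
have [kIJ|] := boolP ((k \in I) || (k \in J)).
  by rewrite sgn_ord_gt ?mul1r // at0; case/orP: kIJ => [/bI|/bJ].
by rewrite negb_or => /andP[kI kJ]; rewrite charge_notin ?mulr0.
Qed.

Lemma sum_sgn_delta I J : below t I -> below t J ->
  \sum_i \sum_k sgn_ord R i k * charge R I J k * (i == a)%:R = #|I|%:R - #|J|%:R.
Proof.
move=> bI bJ; rewrite -(sum_sgn_top bI bJ) -[RHS](sum_mulr_delta (fun i =>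
  \sum_k sgn_ord R i k * charge R I J k)).
by apply: eq_bigr => i _; rewrite mulr_suml.
Qed.

Lemma bform_add_if bI bJ bX bY I J X Y :
  below t I -> below t J -> below t X -> below t Y ->
  bform R (add_if a bI I) (add_if a bJ J) (add_if a bX X) (add_if a bY Y) =
  bform R I J X Y + (bI%:R - bJ%:R) * (#|X|%:R - #|Y|%:R)
                  + (bX%:R - bY%:R) * (#|J|%:R - #|I|%:R).
Proof.
move=> bI' bJ' bX' bY'; rewrite /bform.
have E i k : sgn_ord R i k * charge R (add_if a bI I) (add_if a bJ J) i
                           * charge R (add_if a bX X) (add_if a bY Y) k =
    sgn_ord R i k * charge R I J i * charge R X Y k
    + (bI%:R - bJ%:R) * (sgn_ord R i k * charge R X Y k * (i == a)%:R)
    - (bX%:R - bY%:R) * (sgn_ord R k i * charge R I J i * (k == a)%:R)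
    + (bI%:R - bJ%:R) * (bX%:R - bY%:R) * (sgn_ord R i k * (i == a)%:R * (k == a)%:R).
  rewrite !charge_add_if // [sgn_ord R k i]sgn_ordC.
  set d1 := ((i == a)%:R : R); set d2 := ((k == a)%:R : R); ring.
have D : \sum_i \sum_k sgn_ord R i k * (i == a)%:R * (k == a)%:R = 0.
  rewrite (eq_bigr (fun i => sgn_ord R i a * (i == a)%:R)) => [|i _].
    by rewrite (sum_mulr_delta (fun i => sgn_ord R i a)) sgn_ordii.
  by rewrite (sum_mulr_delta (fun k => sgn_ord R i k * (i == a)%:R)).
under eq_bigr do under eq_bigr do rewrite E.
under eq_bigr do rewrite big_split sumrB big_split /= -!mulr_sumr.
rewrite big_split sumrB big_split /= -!mulr_sumr D mulr0 addr0.
rewrite (sum_sgn_delta bX' bY') [X in _ - _ * X]exchange_big /=.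
by rewrite (sum_sgn_delta bI' bJ') -mulrN opprB.
Qed.

Lemma tbracket_add_if p q r s bI bJ bX bY :
  ilsum t p q (fun I J => ilsum t r s (fun X Y =>
    bform R (add_if a bI I) (add_if a bJ J) (add_if a bX X) (add_if a bY Y)
    * wt (add_if a bI I) (add_if a bJ J) * wt (add_if a bX X) (add_if a bY Y))) =
  (if bI then h a else 1) * (if bJ then g a else 1)
    * ((if bX then h a else 1) * (if bY then g a else 1))
    * (tbracket t p q r s + ((bI%:R - bJ%:R) * (r%:R - s%:R)
                             + (bX%:R - bY%:R) * (q%:R - p%:R)) * (tsum t p q * tsum t r s)).
Proof.
apply: tbracket_affine => I J X Y bI' bJ' bX' bY' /ilpair_card[cI cJ] /ilpair_card[cX cY].
rewrite bform_add_if // !wt_add_if // cI cJ cX cY.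
set x1 := (bI%:R : R); set x2 := (bJ%:R : R); set x3 := (bX%:R : R); set x4 := (bY%:R : R).
ring.
Qed.

Lemma tsum_add_if p q bI bJ :
  ilsum t p q (fun I J => wt (add_if a bI I) (add_if a bJ J)) =
  (if bI then h a else 1) * (if bJ then g a else 1) * tsum t p q.
Proof. by rewrite -ilsumZl; apply: eq_ilsum => I J bI' bJ' _; rewrite wt_add_if. Qed.

Local Ltac expand_tbracketS :=
  rewrite {1}/tbracket ?(ilsumS_eq at0) ?(ilsumS_succ at0) /=
    ?(ilsum_ilsumS_eq at0) ?(ilsum_ilsumS_succ at0) /= ?addr0 ?tbracket_add_if /=.

Lemma tbracketS_succ_succ p q : tbracket t.+1 p.+1 p q.+1 q = tbracket t p.+1 p q.+1 q
  + h a * (tbracket t p.+1 p q q - tsum t p.+1 p * tsum t q q)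
  + h a * (tbracket t p p q.+1 q + tsum t p p * tsum t q.+1 q)
  + h a * h a * tbracket t p p q q.
Proof. expand_tbracketS; ring. Qed.

Lemma tbracketS_eq_eq p q :
  tbracket t.+1 p.+1 p.+1 q.+1 q.+1 = tbracket t p.+1 p.+1 q.+1 q.+1
  + g a * tbracket t p.+1 p.+1 q.+1 q + g a * tbracket t p.+1 p q.+1 q.+1
  + g a * g a * tbracket t p.+1 p q.+1 q.
Proof. expand_tbracketS; ring. Qed.

Lemma tbracketS_eq_succ p q :
  tbracket t.+1 p.+1 p.+1 q.+1 q = tbracket t p.+1 p.+1 q.+1 q
  + h a * tbracket t p.+1 p.+1 q q
  + g a * (tbracket t p.+1 p q.+1 q - tsum t p.+1 p * tsum t q.+1 q)
  + g a * h a * (tbracket t p.+1 p q q - tsum t p.+1 p * tsum t q q).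
Proof. expand_tbracketS; ring. Qed.

Lemma tbracketS_succ_eq p q :
  tbracket t.+1 p.+1 p q.+1 q.+1 = tbracket t p.+1 p q.+1 q.+1
  + g a * (tbracket t p.+1 p q.+1 q + tsum t p.+1 p * tsum t q.+1 q)
  + h a * tbracket t p p q.+1 q.+1
  + h a * g a * (tbracket t p p q.+1 q + tsum t p p * tsum t q.+1 q).
Proof. expand_tbracketS; ring. Qed.

Lemma tsumS_eq p :
  tsum t.+1 p p = tsum t p p + if p is p'.+1 then g a * tsum t p p' else 0.
Proof.
by case: p => [|p]; rewrite {1}/tsum (ilsumS_eq at0) /= !tsum_add_if /= ?mul1r.
Qed.

Lemma tsumS_succ p : tsum t.+1 p.+1 p = tsum t p.+1 p + h a * tsum t p p.
Proof. by rewrite {1}/tsum (ilsumS_succ at0) !tsum_add_if /= !mul1r mulr1. Qed.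

End TruncatedBracket.

Section BracketRelations.
Variables (R : comNzRingType) (n : nat) (h g : 'I_n -> R).
Local Notation tbracket := (tbracket h g).
Local Notation tsum := (tsum h g).

Record tbracket_rels (t : nat) : Prop := TbracketRels {
  tbracket_eq_eq : forall p q, tbracket t p p q q = 0;
  tbracket_succ_succ : forall p q, tbracket t p.+1 p q.+1 q = 0;
  tbracket_eq_succ : forall p q, tbracket t p p q.+1 q + tbracket t p.+1 p q q =
    tsum t p.+1 p * tsum t q q - tsum t p p * tsum t q.+1 q;
  tbracket_eqS_succ : forall p q,
    tbracket t p.+1 p.+1 q.+1 q + tbracket t p.+1 p q.+1 q.+1 = 0 }.

Lemma tbracket_rels0 : tbracket_rels 0.
Proof. by split=> *; rewrite ?tbracket_below0 ?tsum_below0 ?mul0r ?mulr0 ?subrr ?addr0. Qed.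

Lemma tbracket_relsS t (a : 'I_n) : val a = t -> tbracket_rels t -> tbracket_rels t.+1.
Proof.
move=> at0 [Ha Hb Hc Hd].
have HcA p q := canRL (addrK _) (Hc p q).
have HcB p q := canRL (addKr _) (Hc p q).
have HdA p q := canRL (addrK _) (Hd p q).
split.
- case=> [|p] [|q]; rewrite ?tbracket0l ?tbracket0r //.
  by rewrite (tbracketS_eq_eq _ _ at0) Ha Hb HdA; ring.
- by move=> p q; rewrite (tbracketS_succ_succ _ _ at0) Ha Hb HcA; ring.
- case=> [|p] [|q].
  + by rewrite tbracket0l tbracket0r addr0 mulrC subrr.
  + rewrite tbracket0l (tbracketS_succ_eq _ _ at0) Hb HcB !tbracket0l.
    by rewrite !(tsumS_eq _ _ at0) !(tsumS_succ _ _ at0); ring.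
  + rewrite tbracket0r (tbracketS_eq_succ _ _ at0) Hb HcA !tbracket0r.
    by rewrite !(tsumS_eq _ _ at0) !(tsumS_succ _ _ at0); ring.
  + rewrite (tbracketS_eq_succ _ _ at0) (tbracketS_succ_eq _ _ at0) HcA !Hb HdA !Ha.
    by rewrite !(tsumS_eq _ _ at0) !(tsumS_succ _ _ at0); ring.
- move=> p q; rewrite (tbracketS_eq_succ _ _ at0) (tbracketS_succ_eq _ _ at0).
  by rewrite HdA HcA !Ha !Hb; ring.
Qed.

Lemma tbracket_rels_le t : (t <= n)%N -> tbracket_rels t.
Proof.
elim: t => [|t IH] tn; first exact: tbracket_rels0.
exact: (@tbracket_relsS t (Ordinal tn)) (IH (ltnW tn)).
Qed.

End BracketRelations.

Section AlternatingCharge.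
Variables (R : comNzRingType) (n : nat).
Implicit Types (I J : {set 'I_n}) (k : 'I_n).

Definition alt_sign t k : R := if (k < t)%N then (-1) ^+ k else 0.

Lemma charge_ilpair_alt t : (t <= n)%N -> forall I J, below t I -> below t J ->
  (forall p, ilpair p p I J ->
     (p.*2 <= t)%N /\ (p.*2 = t -> forall k, charge R I J k = alt_sign t k)) /\
  (forall p, ilpair p.+1 p I J ->
     (p.*2.+1 <= t)%N /\ (p.*2.+1 = t -> forall k, charge R I J k = alt_sign t k)).
Proof.
elim: t => [|t IH] tn I J bI bJ.
  rewrite (below0 bI) (below0 bJ); split=> p /ilpair_card[]; rewrite cards0 // => <- _.
  by split=> // _ k; rewrite charge0.
pose a := Ordinal tn; have at0 : val a = t by [].
have [bI' ->] := below_S_add_if at0 bI; have [bJ' ->] := below_S_add_if at0 bJ.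
have [IH0 IH1] := IH (ltnW tn) _ _ bI' bJ'.
have altS k : alt_sign t.+1 k = alt_sign t k + (-1) ^+ t * (k == a)%:R.
  rewrite /alt_sign ltnS leq_eqVlt; case: (eqVneq k a) => [->|ka] /=.
    by rewrite eqxx ltnn mulr1 add0r.
  rewrite mulr0 addr0 (_ : (val k == t) = false) //.
  by apply: contraNF ka => /eqP kt; apply/eqP/val_inj.
have chargeS b c k : charge R (add_if a b (I :\ a)) (add_if a c (J :\ a)) k =
    charge R (I :\ a) (J :\ a) k + (b%:R - c%:R) * (k == a)%:R.
  exact: charge_add_if.
have sign_double q : (-1) ^+ q.*2 = 1 :> R by rewrite -signr_odd odd_double.
split=> p; case: (a \in I); case: (a \in J); rewrite /add_if.
- by rewrite (ilpair_eq_U1lr at0).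
- by rewrite (ilpair_eq_U1l at0).
- rewrite (ilpair_eq_U1r at0) //; case: p => [|p] // /IH1[le e].
  split=> [|[tE] k]; first by rewrite doubleS ltnS.
  rewrite (chargeS false true) (e tE) altS -tE exprS sign_double /=.
  by rewrite mulr1 sub0r.
- move=> /IH0[le e]; split=> [|tE]; first exact: leq_trans le _.
  by move: le; rewrite tE ltnn.
- by rewrite (ilpair_succ_U1lr at0).
- rewrite (ilpair_succ_U1l at0) // => /IH0[le e]; split=> [//|[tE] k].
  by rewrite (chargeS true false) (e tE) altS -tE sign_double /= subr0.
- by rewrite (ilpair_succ_U1r at0).
- move=> /IH1[le e]; split=> [|tE]; first exact: leq_trans le _.
  by move: le; rewrite tE ltnn.
Qed.

End AlternatingCharge.

Lemma sum_sign (R : pzRingType) N : \sum_(0 <= k < N) (-1) ^+ k = (odd N)%:R :> R.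
Proof.
elim: N => [|N IH]; first by rewrite big_nil.
by rewrite big_nat_recr //= IH -signr_odd; case: (odd N); rewrite /= ?subrr ?add0r.
Qed.

Lemma sum_sgn_sign (R : pzRingType) i N : (i < N)%N ->
  \sum_(0 <= k < N) ((k < i)%:R - (i < k)%:R) * (-1) ^+ k = (~~ odd N)%:R :> R.
Proof.
elim: N => [|N IH] // iN; rewrite big_nat_recr //=.
case: (ltngtP i N) iN => [iN _|Ni|<- _]; last first.
- rewrite /= mulr0n subrr mul0r addr0 negbK -sum_sign.
  apply: eq_big_nat => k /andP[_ ki].
  by rewrite ki ltnNge ltnW //= mulr0n mulr1n subr0 mul1r.
- by rewrite ltnS leqNgt Ni.
- rewrite IH // /= mulr0n mulr1n sub0r mulN1r -signr_odd.
  by case: (odd N); rewrite /= ?mulr0n ?mulr1n ?expr0 ?expr1 ?sub0r ?opprK ?subrr.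
Qed.

Section SignedBrackets.
Variables (R : realType) (n : nat).
Implicit Types (x : 'I_n -> R) (i k : 'I_n).

Lemma sg_inM x i k : inM x -> Num.sg (x i - x k) = sgn_ord R i k.
Proof.
move=> xM; case: (ltngtP i k) => [ik|ki|/val_inj ->].
- by rewrite sgn_ord_lt // ltr0_sg // subr_lt0 xM.
- by rewrite sgn_ord_gt // gtr0_sg // subr_gt0 xM.
- by rewrite sgn_ordii subrr sgr0.
Qed.

Hypothesis n_odd : odd n.

Lemma sum_sgn_ord_sign i : \sum_k sgn_ord R i k * (-1) ^+ k = 0.
Proof. by have := sum_sgn_sign R (ltn_ord i); rewrite big_mkord n_odd. Qed.

Lemma pbracket_sign_r x (f G : ('I_n -> R) -> R) c : inM x ->
  (forall k, partial G k x = (-1) ^+ k * c) -> pbracket f G x = 0.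
Proof.
move=> xM dG; rewrite /pbracket big1 // => i _.
rewrite (eq_bigr (fun k => partial f i x * c * (sgn_ord R i k * (-1) ^+ k))) => [|k _].
  by rewrite -mulr_sumr sum_sgn_ord_sign mulr0.
by rewrite sg_inM // dG; ring.
Qed.

Lemma pbracket_sign_l x (f G : ('I_n -> R) -> R) c : inM x ->
  (forall k, partial G k x = (-1) ^+ k * c) -> pbracket G f x = 0.
Proof.
move=> xM dG; rewrite /pbracket exchange_big big1 // => k _.
rewrite (eq_bigr (fun i => - (partial f k x * c * (sgn_ord R k i * (-1) ^+ i)))) => [|i _].
  by rewrite sumrN -mulr_sumr sum_sgn_ord_sign mulr0 oppr0.
by rewrite sg_inM // sgn_ordC dG; ring.
Qed.

End SignedBrackets.

Section DeriveSums.
Variable R : realType.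

Lemma is_derive_sum_pred (T : finType) (P : pred T) (f : T -> R -> R) (df : T -> R) (x : R) :
  (forall i, P i -> is_derive x 1 (f i) (df i)) ->
  is_derive x 1 (fun y => \sum_(i | P i) f i y) (\sum_(i | P i) df i).
Proof.
move=> fP; rewrite unlock /=; elim: (index_enum T) => [|j r IH] /=.
  exact: is_derive_cst.
by case: ifP => Pj //; apply: is_deriveD => //; apply: fP.
Qed.

Lemma is_derive_scale_expR_affine (C e c x : R) :
  is_derive x 1 (fun y => C * expR (e * y + c)) (C * (expR (e * x + c) * e)).
Proof.
have dlin := is_deriveD (is_deriveZ e (@is_derive_id _ R^o x 1)) (@is_derive_cst _ R^o R^o c x 1).
apply: is_derive_eq (is_deriveZ C (is_derive1_comp (is_derive_expR _) dlin)) _.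
change (C * (expR (e * x + c) * (e * 1 + 0)) = C * (expR (e * x + c) * e)).
by rewrite mulr1 addr0.
Qed.

End DeriveSums.

Section PeakonHamiltonians.
Variables (R : realType) (n : nat) (m : 'I_n -> R).
Implicit Types (x : 'I_n -> R) (I J : {set 'I_n}).
Local Notation hexp x := (fun i => m i * expR (x i)).
Local Notation gexp x := (fun i => m i * expR (- x i)).

Lemma hI_upd x I i u : hI m I (upd x i u) = hI m I x * expR ((i \in I)%:R * (u - x i)).
Proof.
rewrite /hI /upd; case iI: (i \in I); last first.
  rewrite mul0r expR0 mulr1; apply: eq_bigr => j jI.
  by case: eqP => // ji; rewrite ji iI in jI.
rewrite (bigD1 i) // [in RHS](bigD1 i) //= eqxx mul1r.
rewrite (eq_bigr (fun j => m j * expR (x j))) => [|j /andP[_ /negbTE ->] //].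
have -> : expR u = expR (x i) * expR (u - x i) by rewrite -expRD addrC subrK.
by rewrite mulrA mulrAC.
Qed.

Lemma gJ_upd x J i u :
  gJ m J (upd x i u) = gJ m J x * expR (- ((i \in J)%:R * (u - x i))).
Proof.
rewrite /gJ /upd; case iJ: (i \in J); last first.
  rewrite mul0r oppr0 expR0 mulr1; apply: eq_bigr => j jJ.
  by case: eqP => // ji; rewrite ji iJ in jJ.
rewrite (bigD1 i) // [in RHS](bigD1 i) //= eqxx mul1r.
rewrite (eq_bigr (fun j => m j * expR (- x j))) => [|j /andP[_ /negbTE ->] //].
have -> : expR (- u) = expR (- x i) * expR (- (u - x i)) by rewrite -expRD opprB addKr.
by rewrite mulrA mulrAC.
Qed.

Lemma hI_gJ_upd x I J i u : hI m I (upd x i u) * gJ m J (upd x i u) =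
  wt (hexp x) (gexp x) I J * expR (charge R I J i * u + - (charge R I J i * x i)).
Proof.
rewrite hI_upd gJ_upd mulrACA -expRD.
by congr (_ * expR _); rewrite /charge; ring.
Qed.

Lemma partial_Hsum p q i x :
  partial (Hsum m p q) i x = ilsum n p q (fun I J => charge R I J i * wt (hexp x) (gexp x) I J).
Proof.
rewrite /partial /Hsum derive1E.
under eq_fun do under eq_bigr do under eq_bigr do rewrite hI_gJ_upd.
have dH := is_derive_sum_pred (P := fun I : {set 'I_n} => #|I| == p) (fun I _ =>
  is_derive_sum_pred (P := fun J => (#|J| == q) && interl I J) (fun J _ =>
  is_derive_scale_expR_affine (wt (hexp x) (gexp x) I J) (charge R I J i)
                              (- (charge R I J i * x i)) (x i))).
rewrite (@derive_val _ _ _ _ _ _ _ dH) ilsum_ord.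
apply: eq_bigr => I _; apply: eq_bigr => J _.
by rewrite subrr expR0 mul1r mulrC.
Qed.

Lemma Hsum_tsum p q x : Hsum m p q x = tsum (hexp x) (gexp x) n p q.
Proof. by rewrite /tsum ilsum_ord. Qed.

Lemma pbracket_Hsum p q r s x : inM x ->
  pbracket (Hsum m p q) (Hsum m r s) x = tbracket (hexp x) (gexp x) n p q r s.
Proof.
move=> xM; rewrite tbracketE; apply: eq_bigr => i _; apply: eq_bigr => k _.
by rewrite !partial_Hsum sg_inM.
Qed.

End PeakonHamiltonians.

Lemma charge_full (R : comNzRingType) K (I J : {set 'I_(K.*2.+1)}) k :
  ilpair K.+1 K I J -> charge R I J k = (-1) ^+ k.
Proof.
move=> IJ; have [_ /(_ K IJ)[_ chargeE]] :=
  charge_ilpair_alt R (leqnn _) (below_ord I) (below_ord J).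
by rewrite chargeE // /alt_sign ltn_ord.
Qed.

Lemma partial_Hc (R : realType) K (m x : 'I_(K.*2.+1) -> R) k :
  partial (Hc m) k x = (-1) ^+ k * Hc m x.
Proof.
rewrite /Hc partial_Hsum Hsum_tsum -ilsumZl.
by apply: eq_ilsum => I J _ _ IJ; rewrite charge_full.
Qed.

Unset Implicit Arguments.

Theorem theorem5 (R : realType) (K : nat) (m : 'I_(K.*2.+1) -> R)
  (hm : forall i, 0 < m i) :
  (forall j1 j2 : nat, (1 <= j1 <= K)%N -> (1 <= j2 <= K)%N ->
     forall x : 'I_(K.*2.+1) -> R, inM x ->
       pbracket (Hj m j1) (Hj m j2) x = 0) /\
  (forall j : nat, (1 <= j <= K)%N ->
     forall x : 'I_(K.*2.+1) -> R, inM x ->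
       pbracket (Hj m j) (Hc m) x = 0 /\ pbracket (Hc m) (Hj m j) x = 0).
Proof.
have n_odd : odd K.*2.+1 by rewrite /= odd_double.
split=> [j1 j2 _ _ x xM | j _ x xM].
  rewrite pbracket_Hsum //.
  by apply: tbracket_eq_eq; apply: tbracket_rels_le.
split; [exact: pbracket_sign_r (partial_Hc m x) | exact: pbracket_sign_l (partial_Hc m x)].
Qed.
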